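(* Let $k$ be an algebraically closed field of characteristic zero, $\mathfrak g$ a nonzero finite-dimensional nilpotent Lie algebra over $k$, and $(A,\cdot)$ an LR-structure on $\mathfrak g$ such that the commuting family $\{L(x):x\in A\}$ has a single weight $\alpha$ on $A$ and $\alpha\ne0$. Then $A$ is commutative (so $\mathfrak g$ is abelian, and the zero product is a complete LR-structure on $\mathfrak g$).
   Context: An LR-algebra is a vector space $A$ with a bilinear product $\cdot$ satisfying $x\cdot(y\cdot z)=y\cdot(x\cdot z)$ and $(x\cdot y)\cdot z=(x\cdot z)\cdot y$ for all $x,y,z\in A$. An LR-structure on a Lie algebra $\mathfrak g$ is an LR-algebra product on the underlying vector space of $\mathfrak g$ with $x\cdot y-y\cdot x=[x,y]$. $L(x)y=x\cdot y$. An LR-structure is complete if all right multiplications $y\mapsto y\cdot x$ are nilpotent. ''Single weight $\alpha$'' means that each $L(x)$ has only the eigenvalue $\alpha(L(x))$, where $\alpha$ is a linear form on the span of the $L(x)$. *)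

From HB Require Import structures.
From mathcomp Require Import all_boot all_order all_algebra.
Set Implicit Arguments. Unset Strict Implicit. Unset Printing Implicit Defensive.
Import GRing.Theory.
Local Open Scope ring_scope.

Definition bilinear (k : fieldType) (n : nat)
  (f : 'rV[k]_n -> 'rV[k]_n -> 'rV[k]_n) : Prop :=
  (forall (a : k) (x y z : 'rV[k]_n), f (a *: x + y) z = a *: f x z + f y z) /\
  (forall (a : k) (x y z : 'rV[k]_n), f z (a *: x + y) = a *: f z x + f z y).

Definition is_lie_bracket (k : fieldType) (n : nat)
  (br : 'rV[k]_n -> 'rV[k]_n -> 'rV[k]_n) : Prop :=
  bilinear br /\
  (forall x, br x x = 0) /\
  (forall x y z, br x (br y z) + br y (br z x) + br z (br x y) = 0).

(* The term
   C^{m+1} = [g, C^m] is spanned by right-normed brackets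
   [x_1, [x_2, ..., [x_m, y]...]], so C^{m+1} = 0 iff all of these vanish. *)
Definition lie_nilpotent (k : fieldType) (n : nat)
  (br : 'rV[k]_n -> 'rV[k]_n -> 'rV[k]_n) : Prop :=
  exists m : nat, forall (s : seq 'rV[k]_n) (y : 'rV[k]_n),
    size s = m -> foldr br y s = 0.

Definition is_LR_algebra (k : fieldType) (n : nat)
  (mul : 'rV[k]_n -> 'rV[k]_n -> 'rV[k]_n) : Prop :=
  bilinear mul /\
  (forall x y z, mul x (mul y z) = mul y (mul x z)) /\
  (forall x y z, mul (mul x y) z = mul (mul x z) y).

Definition is_LR_structure (k : fieldType) (n : nat)
  (br mul : 'rV[k]_n -> 'rV[k]_n -> 'rV[k]_n) : Prop :=
  is_LR_algebra mul /\ (forall x y, mul x y - mul y x = br x y).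

(* L(x) as a matrix acting on row vectors: v *m Lmx mul x = mul x v. *)
Definition Lmx (k : fieldType) (n : nat)
  (mul : 'rV[k]_n -> 'rV[k]_n -> 'rV[k]_n) (x : 'rV[k]_n) : 'M[k]_n :=
  lin1_mx (mul x).

From HB Require Import structures.
From mathcomp Require Import all_boot all_order all_algebra.
Import GRing.Theory.
Local Open Scope ring_scope.

(* The argument is purely algebraic and needs none of the hypotheses on the
   field or on nilpotency: it only uses that some left multiplication is
   bijective.
   1. Pick e with alpha(L(e)) != 0.  Since alpha(L(e)) is the only
      eigenvalue of L(e), the value 0 is not an eigenvalue, so the matrix
      L(e) is invertible, i.e. y |-> e.y is a bijection.
   2. In any LR-algebra (a set with a product satisfying the left and right
      commutativity identities) in which some left multiplication L(e) is
      surjective, the product is associative; if L(e) is moreover injective,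
      the product is commutative.
   3. Hence the LR-product is commutative, and the Lie bracket
      [x, y] = x.y - y.x vanishes. *)

Section LRMagma.
Variables (T : Type) (mul : T -> T -> T).
Hypothesis left_comm : forall x y z, mul x (mul y z) = mul y (mul x z).
Hypothesis right_comm : forall x y z, mul (mul x y) z = mul (mul x z) y.

(* If L(e) is surjective the product is associative:
   (z.(e.w)).y = (e.(z.w)).y = (e.y).(z.w) = z.((e.y).w) = z.((e.w).y). *)
Lemma LR_assoc_of_surjective (e : T) :
  (forall w, exists w', w = mul e w') -> associative mul.
Proof.
move=> surj z w y; have [w' ->] := surj w; apply/esym.
rewrite [mul z (mul e w')]left_comm right_comm.
by rewrite [mul (mul e y) (mul z w')]left_comm [mul (mul e y) w']right_comm.
Qed.

(* In an associative LR-magma with L(e) injective the product is commutative: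
   e.(y.z) = (e.y).z = (e.z).y = e.(z.y). *)
Lemma LR_comm_of_injective (e : T) :
  associative mul -> injective (mul e) -> commutative mul.
Proof.
move=> mulA inj_e y z; apply: inj_e.
by rewrite mulA right_comm -mulA.
Qed.

End LRMagma.

Arguments LR_assoc_of_surjective {T mul} left_comm right_comm {e}.
Arguments LR_comm_of_injective {T mul} right_comm {e}.

(* The matrix lin1_mx f represents f whenever f is k-linear.  The library
   lemma mul_rV_lin1 needs a canonical linear structure on f, which we
   declare on the copy [linear_copy f]. *)
Section Lin1Mx.
Variables (k : fieldType) (n : nat) (f : 'rV[k]_n -> 'rV[k]_n).
Hypothesis f_linear : forall (a : k) (x y : 'rV[k]_n), f (a *: x + y) = a *: f x + f y.

Definition linear_copy : 'rV[k]_n -> 'rV[k]_n := f.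

Fact linear_copy_is_linear : linear_for *:%R linear_copy.
Proof. by move=> a u v; rewrite /linear_copy f_linear. Qed.

HB.instance Definition _ :=
  GRing.isLinear.Build k 'rV[k]_n 'rV[k]_n *:%R linear_copy linear_copy_is_linear.

Lemma mul_rV_lin1_of_linear u : u *m lin1_mx f = f u.
Proof. exact: (mul_rV_lin1 (linear_copy : {linear _ -> _})). Qed.

End Lin1Mx.

(* A square matrix whose only possible eigenvalue is a nonzero scalar is
   invertible: a nonzero kernel vector would give the eigenvalue 0. *)
Lemma unitmx_of_nonzero_spectrum (k : fieldType) (n : nat) (M : 'M[k]_n) (a : k) :
  (forall c, eigenvalue M c -> c = a) -> a != 0 -> M \in unitmx.
Proof.
move=> spec a_neq0; rewrite -row_free_unit -kermx_eq0.
apply: contraTT a_neq0 => ker_neq0.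
have ev0 : eigenvalue M 0.
  by rewrite /eigenvalue /eigenspace raddf0 subr0.
by rewrite -(spec 0 ev0) eqxx.
Qed.

Theorem proposition2p5 (k : closedFieldType) (n : nat)
  (br mul : 'rV[k]_n -> 'rV[k]_n -> 'rV[k]_n) (alpha : 'M[k]_n -> k) :
  [pchar k] =i pred0 ->
  (0 < n)%N ->
  is_lie_bracket br ->
  lie_nilpotent br ->
  is_LR_structure br mul ->
  (* alpha is a linear form (on the span of the L(x), here extended to all matrices) *)
  (forall (a : k) (M N : 'M[k]_n), alpha (a *: M + N) = a * alpha M + alpha N) ->
  (* single weight: each L(x) has only the eigenvalue alpha(L(x)) *)
  (forall (x : 'rV[k]_n) (c : k), eigenvalue (Lmx mul x) c -> c = alpha (Lmx mul x)) ->
  (* alpha is nonzero on span{L(x)} *)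
  (exists x : 'rV[k]_n, alpha (Lmx mul x) != 0) ->
  (forall x y : 'rV[k]_n, mul x y = mul y x) /\
  (forall x y : 'rV[k]_n, br x y = 0).
Proof.
move=> _ _ _ _ [[[_ lin_right] [left_comm right_comm]] mul_br] _ single_weight [e alpha_e].
have L_e u : u *m Lmx mul e = mul e u.
  by apply: mul_rV_lin1_of_linear => a x y; apply: lin_right.
have L_e_unit : Lmx mul e \in unitmx.
  exact: unitmx_of_nonzero_spectrum (single_weight e) alpha_e.
have surj_e w : exists w', w = mul e w'.
  by exists (w *m invmx (Lmx mul e)); rewrite -L_e mulmxKV.
have inj_e : injective (mul e).
  by apply: (can_inj (g := mulmx^~ (invmx (Lmx mul e)))) => u; rewrite -L_e mulmxK.
have mulA := LR_assoc_of_surjective left_comm right_comm surj_e.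
have mulC := LR_comm_of_injective right_comm mulA inj_e.
by split=> // x y; rewrite -mul_br mulC subrr.
Qed.
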